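(* Let $V$ be a real vector space and $C$ a cone in $V$. Suppose $X$ and $S$ are $C$-antichain-convex subsets of $V$ with $S\subseteq X$, and $R$ is a total and $C$-antichain-convex relation on $X$. Then $\mathcal{M}(R,S)$ is $C$-antichain-convex.
   Context: A cone in $V$ is a subset $C$ with $\lambda C\subseteq C$ for all $\lambda>0$ (possibly empty, need not contain $0$). $A\subseteq V$ is $C$-antichain-convex iff for all $x,y\in A$ and $\lambda\in[0,1]$ with $y-x\notin C\cup(-C)$ one has $\lambda x+(1-\lambda)y\in A$. For a relation $R\subseteq X\times X$, $R(x)=\{t\in X:(t,x)\in R\}$; $R$ is total iff for all $s,t\in X$, $t\in R(s)$ or $s\in R(t)$; $R$ is $C$-antichain-convex iff $R(x)$ is $C$-antichain-convex for every $x\in X$. For $S\subseteq X$, $m\in S$ is $R$-maximal on $S$ iff for every $s\in S$ with $s\in R(m)$ one has $m\in R(s)$; $\mathcal{M}(R,S)$ is the set of $R$-maximals on $S$. *)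

From HB Require Import structures.
From mathcomp Require Import all_boot all_order all_algebra.
From mathcomp Require Import reals.
Set Implicit Arguments. Unset Strict Implicit. Unset Printing Implicit Defensive.
Import Order.TTheory GRing.Theory Num.Theory.
Local Open Scope ring_scope.

Section Defs.
Variables (R : realType) (V : lmodType R).

(* A cone: lambda C ⊆ C for all lambda > 0 (may be empty, need not contain 0). *)
Definition is_cone (C : V -> Prop) : Prop :=
  forall (lam : R) (x : V), 0 < lam -> C x -> C (lam *: x).

Definition antichain_convex (C A : V -> Prop) : Prop :=
  forall (x y : V) (lam : R), A x -> A y -> 0 <= lam <= 1 ->
    ~ (C (y - x) \/ C (- (y - x))) ->
    A (lam *: x + (1 - lam) *: y).

(* A relation Rel ⊆ X × X is encoded as a predicate on pairs (t, x),
   together with the hypothesis that it is contained in X × X.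
   Rsec Rel x = R(x) = { t : (t, x) ∈ Rel }. *)
Definition Rsec (Rel : V -> V -> Prop) (x : V) : V -> Prop := fun t => Rel t x.

Definition rel_on (X : V -> Prop) (Rel : V -> V -> Prop) : Prop :=
  forall s t, Rel s t -> X s /\ X t.

Definition total_on (X : V -> Prop) (Rel : V -> V -> Prop) : Prop :=
  forall s t, X s -> X t -> Rsec Rel s t \/ Rsec Rel t s.

Definition rel_antichain_convex (C X : V -> Prop) (Rel : V -> V -> Prop) : Prop :=
  forall x, X x -> antichain_convex C (Rsec Rel x).

Definition is_maximal (Rel : V -> V -> Prop) (S : V -> Prop) (m : V) : Prop :=
  S m /\ forall s, S s -> Rsec Rel m s -> Rsec Rel s m.

Definition maximals (Rel : V -> V -> Prop) (S : V -> Prop) : V -> Prop :=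
  is_maximal Rel S.

End Defs.

(* With R total on X, an element m of S is R-maximal on S exactly when
   m ∈ R(s) for every s ∈ S, so M(R,S) = S ∩ ⋂_{s ∈ S} R(s).  Each R(s) is
   C-antichain-convex, and antichain-convexity is preserved by intersections. *)
From HB Require Import structures.
From mathcomp Require Import all_boot all_order all_algebra.
From mathcomp Require Import reals.
Set Implicit Arguments. Unset Strict Implicit.
Import Order.TTheory GRing.Theory Num.Theory.
Local Open Scope ring_scope.

Section AntichainConvex.
Variables (R : realType) (V : lmodType R) (C : V -> Prop).

Lemma antichain_convex_ext (A B : V -> Prop) :
  (forall x, A x <-> B x) -> antichain_convex C A -> antichain_convex C B.
Proof.
move=> eqAB convA x y lam /eqAB Ax /eqAB Ay lam01 incomp.
exact/eqAB/convA.
Qed.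

Lemma antichain_convexI (A B : V -> Prop) :
  antichain_convex C A -> antichain_convex C B ->
  antichain_convex C (fun x => A x /\ B x).
Proof.
move=> convA convB x y lam [Ax Bx] [Ay By] lam01 incomp.
by split; [exact: convA | exact: convB].
Qed.

Lemma antichain_convex_bigcap (I : Type) (P : I -> Prop) (A : I -> V -> Prop) :
  (forall i, P i -> antichain_convex C (A i)) ->
  antichain_convex C (fun x => forall i, P i -> A i x).
Proof.
move=> convA x y lam Ax Ay lam01 incomp i Pi.
exact: convA (Ax i Pi) (Ay i Pi) lam01 incomp.
Qed.

Lemma is_maximal_totalP (X S : V -> Prop) (Rel : V -> V -> Prop) (m : V) :
  total_on X Rel -> (forall s, S s -> X s) ->
  is_maximal Rel S m <-> S m /\ forall s, S s -> Rsec Rel s m.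
Proof.
move=> totR subSX; split=> [[Sm maxm] | [Sm above_m]].
- split=> // s Ss.
  by have [|/(maxm s Ss)] := totR s m (subSX s Ss) (subSX m Sm).
- by split=> // s Ss _; exact: above_m.
Qed.

End AntichainConvex.

Theorem theorem11 (R : realType) (V : lmodType R)
  (C X S : V -> Prop) (Rel : V -> V -> Prop) :
  is_cone C ->
  antichain_convex C X ->
  antichain_convex C S ->
  (forall s, S s -> X s) ->
  rel_on X Rel ->
  total_on X Rel ->
  rel_antichain_convex C X Rel ->
  antichain_convex C (maximals Rel S).
Proof.
move=> _ _ convS subSX _ totR convR.
have convM : antichain_convex C (fun m => S m /\ forall s, S s -> Rsec Rel s m).
  apply: antichain_convexI => //.
  by apply: antichain_convex_bigcap => s Ss; exact: convR (subSX s Ss).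
exact: (antichain_convex_ext (fun m => iff_sym (is_maximal_totalP m totR subSX)) convM).
Qed.
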